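(* On the interval $[0,1]$: (i) the function $\dfrac{\cos(\frac12\pi x)}{1-x^2}$ attains its global maximum at $x=0$; (ii) the function $\dfrac{(x^2+1)\cos^2(\frac12\pi x)}{(1-x^2)^2}$ attains its global minimum at $x=0$.
   Context: At $x=1$ both functions have removable singularities and are understood as their continuous extensions. *)

From Stdlib Require Import Reals.
Open Scope R_scope.

(* f(x) = cos(pi x / 2) / (1 - x^2), extended continuously at x = 1
   (limit value pi/4). *)
Definition f6 (x : R) : R :=
  if Req_EM_T x 1 then PI / 4 else cos (PI * x / 2) / (1 - x ^ 2).

(* g(x) = (x^2 + 1) cos^2(pi x / 2) / (1 - x^2)^2, extended continuously at
   x = 1 (limit value 2 (pi/4)^2 = pi^2/8). *)
Definition g6 (x : R) : R :=
  if Req_EM_T x 1 then PI ^ 2 / 8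
  else (x ^ 2 + 1) * (cos (PI * x / 2)) ^ 2 / (1 - x ^ 2) ^ 2.

(** Both inequalities reduce, after clearing denominators, to comparing
    [cos (PI x / 2)] with a polynomial in [x].  Near [x = 0] the Taylor
    polynomials of [cos] of degree 2 and 4 suffice; near [x = 1] one writes
    [cos (PI x / 2) = sin (PI s / 2)] with [s = 1 - x] and uses the Taylor
    polynomials of [sin] instead.  The only information about [PI] needed is
    [3 <= PI <= 16/5]. *)

From Stdlib Require Import Reals Lra Psatz.
Open Scope R_scope.

Lemma cos_le_taylor4 t : 0 <= t <= PI / 2 -> cos t <= 1 - t ^ 2 / 2 + t ^ 4 / 24.
Proof.
  intros [t_ge0 t_le]; pose proof PI_RGT_0.
  destruct (cos_bound t 0) as [_ ub]; try lra.
  unfold cos_approx, cos_term in ub; simpl in ub; lra.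
Qed.

Lemma taylor2_le_cos t : 0 <= t <= PI / 2 -> 1 - t ^ 2 / 2 <= cos t.
Proof.
  intros [t_ge0 t_le]; pose proof PI_RGT_0.
  destruct (cos_bound t 0) as [lb _]; try lra.
  unfold cos_approx, cos_term in lb; simpl in lb; lra.
Qed.

Lemma taylor3_le_sin u : 0 <= u <= PI -> u - u ^ 3 / 6 <= sin u.
Proof.
  intros [u_ge0 u_le].
  destruct (sin_bound u 0) as [lb _]; try lra.
  unfold sin_approx, sin_term in lb; simpl in lb; lra.
Qed.

Lemma PI_gt_3 : 3 < PI.
Proof. pose proof PI2_3_2; lra. Qed.

(* [cos (PI/2) = 0] together with the quartic upper bound forces [PI] to be small. *)
Lemma PI_le_16_5 : PI <= 16 / 5.
Proof.
  pose proof PI_4; pose proof PI_RGT_0.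
  assert (taylor_nonneg : 0 <= 1 - (PI / 2) ^ 2 / 2 + (PI / 2) ^ 4 / 24).
  { rewrite <- cos_PI2; apply cos_le_taylor4; lra. }
  destruct (Rle_or_lt PI (16 / 5)) as [|]; [assumption | exfalso].
  set (z := (PI / 2) ^ 2) in *.
  assert (64 / 25 < z <= 4) by (unfold z; nra).
  replace ((PI / 2) ^ 4) with (z ^ 2) in taylor_nonneg by (unfold z; ring).
  nra.
Qed.

Lemma cos_half_pi_le_one_sub_sq_near0 x :
  0 <= x <= 3 / 5 -> cos (PI * x / 2) <= 1 - x ^ 2.
Proof.
  intros x_bnd; pose proof PI_gt_3; pose proof PI_le_16_5.
  eapply Rle_trans; [apply cos_le_taylor4; split; nra |].
  set (p := PI) in *.
  replace (1 - (p * x / 2) ^ 2 / 2 + (p * x / 2) ^ 4 / 24)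
    with (1 - x ^ 2 * (p ^ 2 / 8 - p ^ 4 * x ^ 2 / 384)) by field.
  assert (9 <= p ^ 2 <= 256 / 25) by nra.
  assert (p ^ 4 <= (256 / 25) ^ 2) by nra.
  assert (p ^ 4 * x ^ 2 <= (256 / 25) ^ 2 * (9 / 25))
    by (apply Rmult_le_compat; nra).
  assert (1 <= p ^ 2 / 8 - p ^ 4 * x ^ 2 / 384) by nra.
  assert (0 <= x ^ 2) by nra.
  nra.
Qed.

Lemma sin_half_pi_le_near0 s :
  0 < s <= 2 / 5 -> sin (PI * s / 2) <= s * (2 - s).
Proof.
  intros s_bnd; pose proof PI_gt_3; pose proof PI_le_16_5.
  assert (sin (PI * s / 2) < PI * s / 2) by (apply sin_lt_x; nra).
  nra.
Qed.

Lemma cos_half_pi_le_one_sub_sq x :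
  0 <= x < 1 -> cos (PI * x / 2) <= 1 - x ^ 2.
Proof.
  intros x_bnd.
  destruct (Rle_or_lt x (3 / 5)).
  - apply cos_half_pi_le_one_sub_sq_near0; lra.
  - replace (PI * x / 2) with (PI / 2 - PI * (1 - x) / 2) by field.
    rewrite cos_shift.
    replace (1 - x ^ 2) with ((1 - x) * (2 - (1 - x))) by ring.
    apply sin_half_pi_le_near0; lra.
Qed.

Lemma one_sub_sq_sq_le_near0 z a :
  0 <= z <= 1 / 4 -> 9 / 8 <= a <= 32 / 25 ->
  (1 - z) ^ 2 <= (1 + z) * (1 - a * z) ^ 2.
Proof.
  intros z_bnd a_bnd.
  (* the difference is [z (3 - 2a + z (a^2 - 2a - 1) + a^2 z^2)] *)
  assert (0 <= (1 / 4 - z) * (2 - 81 / 64 * (z + 1 / 4)))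
    by (apply Rmult_le_pos; lra).
  assert (81 / 64 * z ^ 2 <= a ^ 2 * z ^ 2) by (apply Rmult_le_compat_r; nra).
  assert (0 <= z * (a - 1) ^ 2) by (apply Rmult_le_pos; nra).
  assert (0 <= z * (3 - 2 * a + z * (a ^ 2 - 2 * a - 1) + a ^ 2 * z ^ 2))
    by (apply Rmult_le_pos; nra).
  nra.
Qed.

Lemma one_sub_sq_sq_le_cos_sq_near0 x :
  0 <= x <= 1 / 2 -> (1 - x ^ 2) ^ 2 <= (x ^ 2 + 1) * cos (PI * x / 2) ^ 2.
Proof.
  intros x_bnd; pose proof PI_gt_3; pose proof PI_le_16_5.
  assert (cos_lb : 1 - PI ^ 2 / 8 * x ^ 2 <= cos (PI * x / 2)).
  { replace (1 - PI ^ 2 / 8 * x ^ 2) with (1 - (PI * x / 2) ^ 2 / 2) by field.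
    apply taylor2_le_cos; split; nra. }
  assert (a_bnd : 9 / 8 <= PI ^ 2 / 8 <= 32 / 25) by nra.
  assert (z_bnd : 0 <= x ^ 2 <= 1 / 4) by nra.
  pose proof (one_sub_sq_sq_le_near0 (x ^ 2) (PI ^ 2 / 8) z_bnd a_bnd).
  assert (PI ^ 2 / 8 * x ^ 2 <= 32 / 25 * (1 / 4))
    by (apply Rmult_le_compat; lra).
  assert ((1 - PI ^ 2 / 8 * x ^ 2) ^ 2 <= cos (PI * x / 2) ^ 2)
    by (apply pow_incr; lra).
  nra.
Qed.

Lemma two_sub_sq_le_near0 s :
  0 < s <= 1 / 2 ->
  (2 - s) ^ 2 <= (2 - 2 * s + s ^ 2) * (3 / 2 - 9 * s ^ 2 / 16) ^ 2.
Proof.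
  intros s_bnd.
  assert (0 <= s ^ 3) by (apply pow_le; lra).
  assert (s ^ 4 <= s ^ 3 / 2) by (replace (s ^ 4) with (s ^ 3 * s) by ring; nra).
  assert (s ^ 5 <= s ^ 3 / 4) by (replace (s ^ 5) with (s ^ 3 * s ^ 2) by ring; nra).
  assert (0 <= (1 / 2 - s) * (1695 / 2048 + 799 / 1024 * s - 1377 / 512 * s ^ 2))
    by (apply Rmult_le_pos; nra).
  nra.
Qed.

(* [u - u^3/6] at [u = PI s/2] is increasing in [PI] on [[3, 16/5]], so [PI = 3]
   gives the bound. *)
Lemma sin_half_pi_ge_near0 s :
  0 < s <= 1 / 2 -> s * (3 / 2 - 9 * s ^ 2 / 16) <= sin (PI * s / 2).
Proof.
  intros s_bnd; pose proof PI_gt_3; pose proof PI_le_16_5.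
  eapply Rle_trans; [| apply taylor3_le_sin; split; nra].
  set (p := PI) in *.
  enough (0 <= s * ((p - 3) * (1 / 2 - s ^ 2 * (p ^ 2 + 3 * p + 9) / 48)))
    by (unfold p in *; nra).
  assert (s ^ 2 * (p ^ 2 + 3 * p + 9) <= 1 / 4 * 29)
    by (apply Rmult_le_compat; nra).
  apply Rmult_le_pos; [lra |].
  apply Rmult_le_pos; lra.
Qed.

Lemma one_sub_sq_sq_le_cos_sq x :
  0 <= x < 1 -> (1 - x ^ 2) ^ 2 <= (x ^ 2 + 1) * cos (PI * x / 2) ^ 2.
Proof.
  intros x_bnd.
  destruct (Rle_or_lt x (1 / 2)).
  - apply one_sub_sq_sq_le_cos_sq_near0; lra.
  - set (s := 1 - x).
    assert (s_bnd : 0 < s <= 1 / 2) by (unfold s; lra).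
    replace (PI * x / 2) with (PI / 2 - PI * s / 2) by (unfold s; field).
    rewrite cos_shift.
    replace (1 - x ^ 2) with (s * (2 - s)) by (unfold s; ring).
    replace (x ^ 2 + 1) with (2 - 2 * s + s ^ 2) by (unfold s; ring).
    pose proof (two_sub_sq_le_near0 s s_bnd).
    pose proof (sin_half_pi_ge_near0 s s_bnd).
    assert (0 <= 3 / 2 - 9 * s ^ 2 / 16) by nra.
    assert ((s * (3 / 2 - 9 * s ^ 2 / 16)) ^ 2 <= sin (PI * s / 2) ^ 2)
      by (apply pow_incr; nra).
    assert (0 <= 2 - 2 * s + s ^ 2) by nra.
    assert (0 <= s ^ 2) by nra.
    nra.
Qed.

Lemma f6_le_1 x : 0 <= x <= 1 -> f6 x <= 1.
Proof.
  intros x_bnd; pose proof PI_4.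
  unfold f6; destruct (Req_EM_T x 1); [lra |].
  assert (0 < 1 - x ^ 2) by nra.
  pose proof (cos_half_pi_le_one_sub_sq x ltac:(lra)).
  apply (Rmult_le_reg_r (1 - x ^ 2)); [assumption |].
  unfold Rdiv; rewrite Rmult_assoc, Rinv_l by lra; lra.
Qed.

Lemma g6_ge_1 x : 0 <= x <= 1 -> 1 <= g6 x.
Proof.
  intros x_bnd; pose proof PI_gt_3.
  unfold g6; destruct (Req_EM_T x 1); [nra |].
  assert (0 < (1 - x ^ 2) ^ 2) by (apply pow_lt; nra).
  pose proof (one_sub_sq_sq_le_cos_sq x ltac:(lra)).
  apply (Rmult_le_reg_r ((1 - x ^ 2) ^ 2)); [assumption |].
  unfold Rdiv; rewrite Rmult_assoc, Rinv_l by lra; lra.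
Qed.

Lemma f6_0 : f6 0 = 1.
Proof.
  unfold f6; destruct (Req_EM_T 0 1); [lra |].
  rewrite Rmult_0_r, Rdiv_0_l, cos_0; field.
Qed.

Lemma g6_0 : g6 0 = 1.
Proof.
  unfold g6; destruct (Req_EM_T 0 1); [lra |].
  rewrite Rmult_0_r, Rdiv_0_l, cos_0; field.
Qed.

Theorem lemma6 :
  (forall x : R, 0 <= x <= 1 -> f6 x <= f6 0) /\
  (forall x : R, 0 <= x <= 1 -> g6 0 <= g6 x).
Proof.
  rewrite f6_0, g6_0.
  split; [exact f6_le_1 | exact g6_ge_1].
Qed.
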